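(* Let $\Pi$ be a $3$-decomposable $30$-half-period with classes $A,B,C$. Then $N_k^{bi}(\Pi)=30$ for $k=11,12,13,14$.
   Context: An allowable sequence on an $n$-element set is a doubly infinite sequence of permutations of the set (lists on positions $1,\dots,n$) in which consecutive permutations differ by swapping two adjacent elements (a transposition) and $\pi_{i+\binom n2}$ is the reverse of $\pi_i$; an $n$-half-period is a block $(\pi_0,\dots,\pi_{\binom n2})$ of consecutive permutations (each pair of elements is swapped exactly once in it). A transposition swapping the elements in positions $i,i+1$ is an $i$-transposition; for $1\le k\le n/2$ it is $k$-critical if it is a $k$-transposition or an $(n-k)$-transposition. An $n$-half-period $\Pi$ ($3\mid n$) is $3$-decomposable if its elements can be labeled $A=\{a_1,\dots,a_{n/3}\}$, $B=\{b_1,\dots,b_{n/3}\}$, $C=\{c_1,\dots,c_{n/3}\}$ so that its first permutation is $(a_{n/3},\dots,a_1,b_1,\dots,b_{n/3},c_1,\dots,c_{n/3})$, every transposition between an element of $A$ and an element of $B$ occurs before every transposition between an element of $C$ and an element of $A\cup B$, and every transposition between $A$ and $C$ occurs before every transposition between $B$ and $C$. A transposition is bichromatic if its two elements lie in different classes among $A,B,C$. $N_k^{bi}(\Pi)$ is the number of bichromatic $k$-critical transpositions of $\Pi$. *)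

From mathcomp Require Import all_boot all_fingroup.
Set Implicit Arguments. Unset Strict Implicit. Unset Printing Implicit Defensive.

(* A permutation (list on positions) is
   p : {perm 'I_n}, where p j is the element at (0-indexed) position j,
   i.e. at the paper's position j+1.
   A sequence of permutations is pi : nat -> {perm 'I_n} (only indices
   0..'C(n,2) matter), together with s : nat -> nat giving the 0-indexed
   position of the swap performed between pi t and pi t.+1: the elements
   at positions s t and (s t).+1 are exchanged, i.e. this is a
   ((s t).+1)-transposition in the paper's 1-indexed convention. *)

Definition adj_step (n : nat) (p q : {perm 'I_n}) (i : nat) : Prop :=
  [/\ i.+1 < n,
      (forall x y : 'I_n, val x = i -> val y = i.+1 -> q x = p y /\ q y = p x) &
      (forall x : 'I_n, val x <> i -> val x <> i.+1 -> q x = p x)].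

Definition swapped (n : nat) (pi : nat -> {perm 'I_n}) (s : nat -> nat)
    (t : nat) (x y : 'I_n) : bool :=
  [exists i : 'I_n, exists j : 'I_n,
     [&& val i == s t, val j == (s t).+1, pi t i == x & pi t j == y]].

Definition half_period (n : nat) (pi : nat -> {perm 'I_n}) (s : nat -> nat) : Prop :=
  (forall t, t < 'C(n, 2) -> adj_step (pi t) (pi t.+1) (s t)) /\
  (forall x y : 'I_n, x != y ->
     #|[set t : 'I_('C(n, 2)) | swapped pi s t x y || swapped pi s t y x]| = 1).

Definition swap_between (n : nat) (pi : nat -> {perm 'I_n}) (s : nat -> nat)
    (t : nat) (P Q : pred 'I_n) : bool :=
  [exists x : 'I_n, exists y : 'I_n,
     swapped pi s t x y && ((P x && Q y) || (Q x && P y))].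

(* 3-decomposability of a half-period on n = 3m elements with labeling
   a_{l+1} = a l, b_{l+1} = b l, c_{l+1} = c l (l : 'I_m, 0-indexed). *)
Definition decomposition3 (m : nat) (pi : nat -> {perm 'I_(3 * m)}) (s : nat -> nat)
    (a b c : 'I_m -> 'I_(3 * m)) : Prop :=
  let inA := fun x => x \in codom a in
  let inB := fun x => x \in codom b in
  let inC := fun x => x \in codom c in
  [/\ (* first permutation (a_m,...,a_1,b_1,...,b_m,c_1,...,c_m) *)
      (forall (j : 'I_(3 * m)) (l : 'I_m),
         [/\ val j = m - 1 - val l -> pi 0 j = a l,
             val j = m + val l -> pi 0 j = b l &
             val j = 2 * m + val l -> pi 0 j = c l]),
      (forall t t' : 'I_('C(3 * m, 2)),
         swap_between pi s t inA inB ->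
         swap_between pi s t' inC (fun x => inA x || inB x) -> t < t') &
      (forall t t' : 'I_('C(3 * m, 2)),
         swap_between pi s t inA inC -> swap_between pi s t' inB inC -> t < t')].

(* a transposition at (1-indexed) position i is k-critical *)
Definition critical (n k i : nat) : bool := (i == k) || (i == n - k).

Definition N_bi (m : nat) (pi : nat -> {perm 'I_(3 * m)}) (s : nat -> nat)
    (a b c : 'I_m -> 'I_(3 * m)) (k : nat) : nat :=
  let same := fun x y : 'I_(3 * m) =>
    [|| (x \in codom a) && (y \in codom a),
        (x \in codom b) && (y \in codom b) |
        (x \in codom c) && (y \in codom c)] in
  #|[set t : 'I_('C(3 * m, 2)) | critical (3 * m) k (s t).+1 &&
       [exists x, exists y, swapped pi s t x y && ~~ same x y]]|.

From mathcomp Require Import all_boot all_fingroup zify.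
Set Implicit Arguments. Unset Strict Implicit. Unset Printing Implicit Defensive.

(* In the first permutation the classes A, B, C fill the position blocks [0, m),
   [m, 2m), [2m, 3m), and every pair is swapped exactly once, in its initial order.
   Let T end the phase of A-B swaps: before T every bichromatic swap is an A-B swap
   (so C-elements stay in their block), after T every one moves a C-element left past
   an element of A or B.  Fix a gap i with m <= i <= 2m.  The number of B-elements
   among the first i entries grows by one exactly at each bichromatic swap across the
   gap before T, from i - m to m (at T all of B precedes A); the number of
   C-elements among the first i entries grows likewise after T, from 0 to m (at the
   end C comes first).  So 3m - i bichromatic swaps cross gap i, and the k-critical
   ones number (3m - k) + k = 3m for m <= k <= 2m, 2k <> 3m. *)

Section Positions.

Variable n : nat.
Implicit Types (p q : {perm 'I_n}) (x y : 'I_n).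

Definition position p x : nat := (p^-1 x)%g.

Lemma position_lt p x : position p x < n.
Proof. exact: ltn_ord. Qed.

Lemma eq_position p x y : (position p x == position p y) = (x == y).
Proof. by rewrite /position val_eqE (inj_eq (@perm_inj _ _)). Qed.

Lemma position_perm p j : position p (p j) = j.
Proof. by rewrite /position permK. Qed.

Lemma position_eq p j x : p j = x -> position p x = j.
Proof. by move=> <-; rewrite position_perm. Qed.

Definition swap_adj (i j : nat) : nat :=
  if j == i then i.+1 else if j == i.+1 then i else j.

Lemma position_adj_step p q i x :
  adj_step p q i -> position q x = swap_adj i (position p x).
Proof.
case=> lt_i1n swap_i fix_others; have lt_in := ltnW lt_i1n.
have px : p (p^-1 x)%g = x by rewrite permKV.
rewrite /swap_adj /position; case: eqP => [at_i | not_i].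
  apply: (@position_eq q (Ordinal lt_i1n)).
  by case: (swap_i _ (Ordinal lt_i1n) at_i erefl) => _ ->.
case: eqP => [at_i1 | not_i1].
  apply: (@position_eq q (Ordinal lt_in)).
  by case: (swap_i (Ordinal lt_in) _ erefl at_i1) => ->.
by apply: position_eq; rewrite fix_others.
Qed.

Lemma ltn_swap_adj i u v : u != v ->
  (swap_adj i u < swap_adj i v) =
  (u < v) (+) (((u == i) && (v == i.+1)) || ((v == i) && (u == i.+1))).
Proof.
rewrite /swap_adj => neq_uv.
case: (u =P i) => [Eu|Nu]; case: (v =P i) => [Ev|Nv];
  case: (u =P i.+1) => [Eu'|Nu']; case: (v =P i.+1) => [Ev'|Nv'] /=;
  try (exfalso; lia).
all: apply/idP/idP; lia.
Qed.

End Positions.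

Section Swaps.

Variables (n : nat) (pi : nat -> {perm 'I_n}) (s : nat -> nat).
Implicit Types (x y : 'I_n).

Lemma swappedE t x y :
  swapped pi s t x y = (position (pi t) x == s t) && (position (pi t) y == (s t).+1).
Proof.
apply/existsP/andP => [[i /existsP [j /and4P [/eqP <- /eqP <- /eqP <- /eqP <-]]]|].
  by rewrite !position_perm.
case=> /eqP xE /eqP yE; exists ((pi t)^-1 x)%g; apply/existsP; exists ((pi t)^-1 y)%g.
rewrite !permKV !eqxx !andbT; apply/andP; split; apply/eqP; [exact: xE | exact: yE].
Qed.

Lemma swapped_neq t x y : swapped pi s t x y -> x != y.
Proof.
rewrite swappedE -(eq_position (pi t)) => /andP [/eqP -> /eqP ->].
by rewrite neq_ltn ltnSn.
Qed.

Lemma swapped_exists t : adj_step (pi t) (pi t.+1) (s t) -> exists x y, swapped pi s t x y.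
Proof.
case=> lt_s1n _ _; exists (pi t (Ordinal (ltnW lt_s1n))), (pi t (Ordinal lt_s1n)).
by rewrite swappedE !position_perm !eqxx.
Qed.

Lemma swapped_uniq t x y x' y' :
  swapped pi s t x y -> swapped pi s t x' y' -> x' = x /\ y' = y.
Proof.
rewrite !swappedE => /andP [/eqP px /eqP py] /andP [/eqP px' /eqP py'].
by split; apply/eqP; rewrite -(eq_position (pi t)) ?px ?px' ?py ?py'.
Qed.

Definition swapped_pair t x y : bool := swapped pi s t x y || swapped pi s t y x.

Lemma order_adj_step t x y : x != y -> adj_step (pi t) (pi t.+1) (s t) ->
  (position (pi t.+1) x < position (pi t.+1) y) =
  (position (pi t) x < position (pi t) y) (+) swapped_pair t x y.
Proof.
move=> neq_xy step; rewrite !(position_adj_step x step) !(position_adj_step y step).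
by rewrite ltn_swap_adj ?eq_position // /swapped_pair !swappedE.
Qed.

Hypothesis hp : half_period pi s.
Local Notation N := 'C(n, 2).

Lemma swapped_pair_once x y : x != y ->
  exists tau : 'I_N, forall t : 'I_N, swapped_pair t x y = (t == tau).
Proof.
case: hp => _ once neq_xy; have /eqP/cards1P [tau tauE] := once x y neq_xy.
by exists tau => t; move/setP: tauE => /(_ t); rewrite !inE.
Qed.

Lemma order_at x y t : x != y -> t <= N ->
  (position (pi t) x < position (pi t) y) =
  (position (pi 0) x < position (pi 0) y) (+)
  [exists t' : 'I_N, (t' < t) && swapped_pair t' x y].
Proof.
move=> neq_xy; have [tau tauE] := swapped_pair_once neq_xy.
have -> : [exists t' : 'I_N, (t' < t) && swapped_pair t' x y] = (tau < t).
  apply/existsP/idP => [[t' /andP [lt_t't]]|lt_taut]; last by exists tau; rewrite tauE eqxx andbT.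
  by rewrite tauE => /eqP <-.
elim: t => [|t IHt] le_t1N; first by rewrite ltn0 addbF.
have tE : swapped_pair t x y = (tau == t :> nat).
  by have := tauE (Ordinal le_t1N); rewrite -val_eqE eq_sym.
rewrite (order_adj_step neq_xy (hp.1 t le_t1N)) IHt ?(ltnW le_t1N) // tE -addbA.
rewrite (ltnS tau t) (leq_eqVlt tau t).
by case: (val tau =P t) => [<-|_]; rewrite ?ltnn ?eqxx ?addbF.
Qed.

Lemma swapped_initial_order t x y : t < N -> swapped pi s t x y ->
  position (pi 0) x < position (pi 0) y.
Proof.
move=> lt_tN sw; have neq_xy := swapped_neq sw.
have := order_at neq_xy (ltnW lt_tN).
have [tau tauE] := swapped_pair_once neq_xy.
have /eqP tE : Ordinal lt_tN == tau by rewrite -tauE /swapped_pair sw.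
have -> : [exists t' : 'I_N, (t' < t) && swapped_pair t' x y] = false.
  apply/existsP => [[t' /andP [lt_t't]]]; rewrite tauE -tE => /eqP t'E.
  by move: lt_t't; rewrite t'E ltnn.
by move: sw; rewrite swappedE addbF => /andP [/eqP -> /eqP ->]; rewrite ltnSn.
Qed.

Lemma order_after_swap x y (tau : 'I_N) t : x != y -> swapped_pair tau x y -> tau < t <= N ->
  (position (pi t) x < position (pi t) y) = (position (pi 0) y < position (pi 0) x).
Proof.
move=> neq_xy sw_tau /andP [lt_taut le_tN]; rewrite (order_at neq_xy le_tN).
have -> : [exists t' : 'I_N, (t' < t) && swapped_pair t' x y].
  by apply/existsP; exists tau; rewrite lt_taut.
have := eq_position (pi 0) x y; rewrite (negbTE neq_xy) addbT => neq_pos.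
apply/idP/idP; lia.
Qed.

Lemma order_reversed_at_end x y : x != y ->
  (position (pi N) x < position (pi N) y) = (position (pi 0) y < position (pi 0) x).
Proof.
move=> neq_xy; have [tau tauE] := swapped_pair_once neq_xy.
by apply: (@order_after_swap x y tau N neq_xy); rewrite ?tauE ?ltn_ord ?leqnn.
Qed.

End Swaps.

Lemma sum_ord_interval n lo hi : \sum_(j < n) (lo <= j < hi) = minn n hi - minn n lo.
Proof.
elim: n => [|n IHn]; first by rewrite big_ord0 !min0n.
rewrite big_ord_recr /= IHn; case: (leqP lo n); case: (ltnP n hi) => /=; lia.
Qed.

Lemma sum_increments (f g : nat -> nat) t0 t1 : t0 <= t1 ->
  (forall t, t0 <= t < t1 -> f t.+1 = f t + g t) ->
  \sum_(t0 <= t < t1) g t = f t1 - f t0.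
Proof.
move=> le_t01 step; rewrite -telescope_sumn_in //.
  by apply: eq_big_nat => t /step ->; rewrite addKn.
by move=> t /step ->; apply: leq_addr.
Qed.

Section PrefixCount.

Variable n : nat.
Implicit Types (p q : {perm 'I_n}) (Y : pred 'I_n).

Lemma sum_position p (F : nat -> nat) :
  \sum_(x : 'I_n) F (position p x) = \sum_(j < n) F j.
Proof.
rewrite (reindex_inj (@perm_inj _ p)) /=.
by apply: eq_bigr => j _; rewrite position_perm.
Qed.

Lemma sum_position_interval p lo hi :
  \sum_(x : 'I_n) (lo <= position p x < hi) = minn n hi - minn n lo.
Proof.
transitivity (\sum_(j < n) (lo <= j < hi)); first exact: (sum_position p (fun j => lo <= j < hi)).
exact: sum_ord_interval.
Qed.

Lemma sum_position_lt p i : i <= n -> \sum_(x : 'I_n) (position p x < i) = i.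
Proof. by move=> le_in; rewrite (sum_position_interval p 0 i); lia. Qed.

Definition prefix_count p Y (i : nat) : nat :=
  \sum_(x : 'I_n) (Y x && (position p x < i)).

Lemma prefix_count_adj_step p q Y i j x y (up : bool) :
  adj_step p q i -> position p x = i -> position p y = i.+1 ->
  (if up then ~~ Y x && Y y : Prop else Y x = Y y) ->
  prefix_count q Y j = prefix_count p Y j + (up && (i.+1 == j)).
Proof.
move=> step xi yi1 Yxy.
have shift : prefix_count q Y j + (Y x && (i.+1 == j)) =
             prefix_count p Y j + (Y y && (i.+1 == j)).
  pose F z : nat := Y z && (i.+1 == j).
  rewrite /prefix_count -/(F x) -/(F y) -(big_pred1_eq addn x F) -(big_pred1_eq addn y F).
  rewrite !(big_mkcond (fun z => z == _)) -!big_split /=.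
  apply: eq_bigr => z _; rewrite -(eq_position p z x) -(eq_position p z y) xi yi1.
  rewrite (position_adj_step z step) /swap_adj.
  rewrite /F; case: (Y z); case: (position p z =P i);
    case: (position p z =P i.+1); case: (i.+1 =P j) => /=; lia.
case: up Yxy shift => [/andP [/negbTE -> ->] | ->] /= shift.
  by rewrite -shift addn0.
by rewrite addn0; apply: addIn shift.
Qed.

Lemma prefix_count_sorted p Y i : i <= n ->
  (forall y z, Y y -> ~~ Y z -> position p z < i -> position p y < position p z) ->
  prefix_count p Y i = minn i (\sum_x Y x).
Proof.
move=> le_in Y_first.
have le_Y : prefix_count p Y i <= \sum_x Y x.
  by apply: leq_sum => x _; case: (Y x); case: (_ < i).
have le_i : prefix_count p Y i <= i.
  rewrite -[leqRHS](sum_position_lt p le_in).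
  by apply: leq_sum => x _; case: (Y x); case: (_ < i).
case: (boolP [exists z, ~~ Y z && (position p z < i)]) => [/existsP [z /andP [Yz zi]] | all_Y].
- have count_all : prefix_count p Y i = \sum_x Y x.
    apply: eq_bigr => y _; case Yy: (Y y) => //=.
    by rewrite (ltn_trans (Y_first y z Yy Yz zi) zi).
  rewrite count_all in le_i *; lia.
- have count_i : prefix_count p Y i = i.
    rewrite -[RHS](sum_position_lt p le_in).
    apply: eq_bigr => x _; case xi: (position p x < i); last by rewrite andbF.
    case Yx: (Y x) => //; case/existsP: all_Y; exists x; by rewrite Yx xi.
  rewrite count_i in le_Y *; lia.
Qed.

End PrefixCount.

Lemma prefix_count_swap_step n (pi : nat -> {perm 'I_n}) s (Y : pred 'I_n) t i (up : bool) :
  adj_step (pi t) (pi t.+1) (s t) ->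
  (forall x y, swapped pi s t x y -> if up then ~~ Y x && Y y : Prop else Y x = Y y) ->
  prefix_count (pi t.+1) Y i = prefix_count (pi t) Y i + (up && ((s t).+1 == i)).
Proof.
move=> step Yxy; have [x [y sw]] := swapped_exists step.
move: (sw); rewrite swappedE => /andP [/eqP xs /eqP ys].
exact: prefix_count_adj_step step xs ys (Yxy x y sw).
Qed.

Section Decomposition3.

Variables (m : nat) (pi : nat -> {perm 'I_(3 * m)}) (s : nat -> nat)
  (a b c : 'I_m -> 'I_(3 * m)).
Hypotheses (hp : half_period pi s) (dec : decomposition3 pi s a b c).
Implicit Types (x y : 'I_(3 * m)).

Local Notation N := 'C(3 * m, 2).
Local Notation pos0 x := (position (pi 0) x).

Lemma mem_codom_a x : (x \in codom a) = (pos0 x < m).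
Proof.
case: dec => init _ _; apply/codomP/idP => [[l ->]|xA].
  have lt_j : m - 1 - l < 3 * m by have := ltn_ord l; lia.
  case: (init (Ordinal lt_j) l) => initA _ _.
  by rewrite -initA // position_perm /=; have := ltn_ord l; lia.
have lt_l : m - 1 - pos0 x < m by lia.
exists (Ordinal lt_l); case: (init ((pi 0)^-1 x)%g (Ordinal lt_l)) => initA _ _.
by rewrite -initA ?permKV //=; move: xA; rewrite /position; lia.
Qed.

Lemma mem_codom_b x : (x \in codom b) = (m <= pos0 x < 2 * m).
Proof.
case: dec => init _ _; apply/codomP/idP => [[l ->]|xB].
  have lt_j : m + l < 3 * m by have := ltn_ord l; lia.
  case: (init (Ordinal lt_j) l) => _ initB _.
  by rewrite -initB // position_perm /=; have := ltn_ord l; lia.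
have lt_l : pos0 x - m < m by lia.
exists (Ordinal lt_l); case: (init ((pi 0)^-1 x)%g (Ordinal lt_l)) => _ initB _.
by rewrite -initB ?permKV //=; move: xB; rewrite /position; lia.
Qed.

Lemma mem_codom_c x : (x \in codom c) = (2 * m <= pos0 x).
Proof.
case: dec => init _ _; apply/codomP/idP => [[l ->]|xC].
  have lt_j : 2 * m + l < 3 * m by have := ltn_ord l; lia.
  case: (init (Ordinal lt_j) l) => _ _ initC.
  by rewrite -initC // position_perm /=; have := ltn_ord l; lia.
have lt_l : pos0 x - 2 * m < m by have := position_lt (pi 0) x; lia.
exists (Ordinal lt_l); case: (init ((pi 0)^-1 x)%g (Ordinal lt_l)) => _ _ initC.
by rewrite -initC ?permKV //=; have := position_lt (pi 0) x; move: xC; rewrite /position; lia.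
Qed.

Definition same_class x y : bool :=
  [|| (x \in codom a) && (y \in codom a),
      (x \in codom b) && (y \in codom b) |
      (x \in codom c) && (y \in codom c)].

Lemma same_classE x y : same_class x y =
  [|| (pos0 x < m) && (pos0 y < m),
      (m <= pos0 x < 2 * m) && (m <= pos0 y < 2 * m) |
      (2 * m <= pos0 x) && (2 * m <= pos0 y)].
Proof. by rewrite /same_class !mem_codom_a !mem_codom_b !mem_codom_c. Qed.

Definition bichromatic (t : nat) : bool :=
  [exists x, exists y, swapped pi s t x y && ~~ same_class x y].

Lemma bichromaticE t x y : swapped pi s t x y -> bichromatic t = ~~ same_class x y.
Proof.
move=> sw; apply/existsP/idP => [[x' /existsP [y' /andP [sw' diff]]]|diff].
  by case: (swapped_uniq sw sw') diff => -> ->.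
by exists x; apply/existsP; exists y; rewrite sw.
Qed.

Local Notation inA := (fun x => x \in codom a).
Local Notation inB := (fun x => x \in codom b).
Local Notation inC := (fun x => x \in codom c).

Definition ab_phase_end : nat :=
  \max_(t : 'I_N | swap_between pi s t inA inB) t.+1.
Local Notation T := ab_phase_end.

Lemma ab_phase_end_le : T <= N.
Proof. by apply/bigmax_leqP => t _; apply: ltn_ord. Qed.

Lemma ab_swap_before (t : 'I_N) : swap_between pi s t inA inB -> t < T.
Proof. exact: (@leq_bigmax_cond _ _ (fun t : 'I_N => (nat_of_ord t).+1)). Qed.

Lemma bichromatic_swap_early t x y : t < T -> swapped pi s t x y ->
  ~~ same_class x y -> (pos0 x < m) && (m <= pos0 y < 2 * m).
Proof.
move=> lt_tT sw diff; have lt_tN := leq_trans lt_tT ab_phase_end_le.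
have lt_xy := swapped_initial_order hp lt_tN sw.
have := position_lt (pi 0) y; rewrite same_classE in diff.
case: (leqP (2 * m) (pos0 y)) => [C_y _ | ]; last lia.
suff : T <= t by lia.
case: dec => _ before_C _; apply/bigmax_leqP => t' ab_t'.
apply: (before_C t' (Ordinal lt_tN) ab_t'); apply/existsP; exists x; apply/existsP; exists y.
rewrite sw /= !mem_codom_a !mem_codom_b !mem_codom_c; lia.
Qed.

Lemma bichromatic_swap_late t x y : T <= t < N -> swapped pi s t x y ->
  ~~ same_class x y -> pos0 x < 2 * m <= pos0 y.
Proof.
move=> /andP [le_Tt lt_tN] sw diff.
have lt_xy := swapped_initial_order hp lt_tN sw.
have := position_lt (pi 0) y; rewrite same_classE in diff.
case: (ltnP (pos0 y) (2 * m)) => [AB_y _ | ]; last lia.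
suff : t < T by lia.
apply: (@ab_swap_before (Ordinal lt_tN)); apply/existsP; exists x; apply/existsP; exists y.
rewrite sw /= !mem_codom_a !mem_codom_b; lia.
Qed.

Lemma sum_class_b : \sum_x (x \in codom b) = m.
Proof.
under eq_bigr => x _ do rewrite mem_codom_b.
by rewrite sum_position_interval; lia.
Qed.

Lemma sum_class_c : \sum_x (x \in codom c) = m.
Proof.
rewrite (eq_bigr (fun x => (2 * m <= pos0 x < 3 * m) : nat)).
  by rewrite sum_position_interval; lia.
by move=> x _; rewrite mem_codom_c position_lt andbT.
Qed.

Lemma prefix_count_B_early t i : t < T ->
  prefix_count (pi t.+1) inB i = prefix_count (pi t) inB i + (bichromatic t && ((s t).+1 == i)).
Proof.
move=> lt_tT; apply: prefix_count_swap_step (hp.1 t (leq_trans lt_tT ab_phase_end_le)) _.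
move=> x y sw; rewrite (bichromaticE sw) /= !mem_codom_b.
case: (boolP (same_class x y)) => [same | /(bichromatic_swap_early lt_tT sw)] /=; last lia.
by rewrite same_classE in same; apply/idP/idP; lia.
Qed.

Lemma prefix_count_C_early t i : t < T ->
  prefix_count (pi t.+1) inC i = prefix_count (pi t) inC i.
Proof.
move=> lt_tT; rewrite -[RHS]addn0.
apply: (@prefix_count_swap_step _ _ _ _ _ _ false (hp.1 t (leq_trans lt_tT ab_phase_end_le))).
move=> x y sw; rewrite /= !mem_codom_c.
case: (boolP (same_class x y)) => [| /(bichromatic_swap_early lt_tT sw)];
  rewrite ?same_classE => classes; apply/idP/idP; lia.
Qed.

Lemma prefix_count_C_late t i : T <= t < N ->
  prefix_count (pi t.+1) inC i = prefix_count (pi t) inC i + (bichromatic t && ((s t).+1 == i)).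
Proof.
move=> t_range; have /andP [_ lt_tN] := t_range.
apply: prefix_count_swap_step (hp.1 t lt_tN) _.
move=> x y sw; rewrite (bichromaticE sw) /= !mem_codom_c.
case: (boolP (same_class x y)) => [same | /(bichromatic_swap_late t_range sw)] /=; last lia.
by rewrite same_classE in same; apply/idP/idP; lia.
Qed.

(* No C-element is swapped with a non-C element before [T], so the C-block stays in place. *)
Lemma c_block_at_phase_end x : 2 * m <= pos0 x -> 2 * m <= position (pi T) x.
Proof.
have unmoved t : t <= T -> prefix_count (pi t) inC (2 * m) = 0.
  elim: t => [_ | t IHt lt_tT]; last by rewrite prefix_count_C_early // IHt // ltnW.
  by apply: big1 => y _; rewrite mem_codom_c; case: leqP.
move=> xC; have /eqP := unmoved T (leqnn T); rewrite sum_nat_eq0 => /forallP /(_ x).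
by rewrite mem_codom_c xC /=; case: leqP.
Qed.

Lemma prefix_count_B_initial i : m <= i <= 2 * m -> prefix_count (pi 0) inB i = i - m.
Proof.
move=> i_range; rewrite /prefix_count (eq_bigr (fun x => (m <= pos0 x < i) : nat)).
  by rewrite sum_position_interval; lia.
by move=> x _; rewrite /= mem_codom_b; congr nat_of_bool; apply/idP/idP; lia.
Qed.

Lemma prefix_count_B_phase_end i : m <= i <= 2 * m -> prefix_count (pi T) inB i = m.
Proof.
move=> i_range; rewrite prefix_count_sorted ?sum_class_b; [lia | lia |] => y z yB zB lt_zi.
have zA : pos0 z < m.
  case: (leqP (2 * m) (pos0 z)) => [/c_block_at_phase_end|]; move: zB; rewrite mem_codom_b; lia.
have neq_zy : z != y by apply: contraNneq zB => ->.
have [tau tauE] := swapped_pair_once hp neq_zy.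
have sw_tau : swapped_pair pi s tau z y by rewrite tauE.
have lt_tauT : tau < T.
  apply: ab_swap_before; apply/existsP; case/orP: sw_tau => sw;
    [exists z; apply/existsP; exists y | exists y; apply/existsP; exists z];
    rewrite sw /= !mem_codom_a !mem_codom_b; move: yB; rewrite mem_codom_b; lia.
have tau_T : tau < T <= N by rewrite lt_tauT ab_phase_end_le.
have not_zy : ~~ (position (pi T) z < position (pi T) y).
  by rewrite (order_after_swap hp neq_zy sw_tau tau_T) -leqNgt; move: yB; rewrite mem_codom_b; lia.
have := eq_position (pi T) z y; rewrite (negbTE neq_zy); lia.
Qed.

Lemma prefix_count_C_phase_end i : i <= 2 * m -> prefix_count (pi T) inC i = 0.
Proof.
move=> le_i2m; apply: big1 => x _; rewrite mem_codom_c.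
case: (leqP (2 * m) (pos0 x)) => [xC|] //=.
by rewrite ltnNge (leq_trans le_i2m (c_block_at_phase_end xC)).
Qed.

Lemma prefix_count_C_end i : m <= i <= 3 * m -> prefix_count (pi N) inC i = m.
Proof.
move=> i_range; rewrite prefix_count_sorted ?sum_class_c; [lia | lia |] => y z yC zC _.
have neq_yz : y != z by apply: contraNneq zC => <-.
rewrite (order_reversed_at_end hp neq_yz); move: yC zC; rewrite !mem_codom_c; lia.
Qed.

Lemma bichromatic_count i : m <= i <= 2 * m ->
  \sum_(t < N) (bichromatic t && ((s t).+1 == i)) = 3 * m - i.
Proof.
move=> i_range; rewrite -(big_mkord xpredT (fun t => (bichromatic t && ((s t).+1 == i)) : nat)).
rewrite (@big_cat_nat _ _ _ T) ?ab_phase_end_le //=.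
rewrite (sum_increments (f := fun t => prefix_count (pi t) inB i)) //; last first.
  by move=> t /andP [_ lt_tT]; apply: prefix_count_B_early.
rewrite (sum_increments (f := fun t => prefix_count (pi t) inC i)) ?ab_phase_end_le //; last first.
  by move=> t; apply: prefix_count_C_late.
rewrite prefix_count_B_phase_end // prefix_count_B_initial // prefix_count_C_phase_end ?prefix_count_C_end; lia.
Qed.

Theorem N_bi_decomposition3 k : m <= k <= 2 * m -> 2 * k != 3 * m ->
  N_bi pi s a b c k = 3 * m.
Proof.
move=> k_range k_not_half.
rewrite /N_bi -sum1_card big_mkcond /=.
rewrite (eq_bigr (fun t : 'I_N => ((bichromatic t && ((s t).+1 == k)) : nat) +
                                  (bichromatic t && ((s t).+1 == 3 * m - k)))) => [|t _].
  by rewrite big_split /= !bichromatic_count; lia.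
rewrite inE -/(bichromatic t) /critical.
by case: (bichromatic t) => //=; case: eqP; case: eqP => /=; lia.
Qed.

End Decomposition3.

Theorem corollary2 (pi : nat -> {perm 'I_(3 * 10)}) (s : nat -> nat)
    (a b c : 'I_10 -> 'I_(3 * 10)) :
  half_period pi s -> decomposition3 pi s a b c ->
  forall k, 11 <= k <= 14 -> N_bi pi s a b c k = 30.
Proof.
move=> hp dec k k_range.
by apply: (N_bi_decomposition3 hp dec); lia.
Qed.
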